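(* Let $\mathbb{X}$ be a finite-dimensional real Banach space. If a non-zero linear operator $T:\mathbb{X}\to\mathbb{X}$ preserves Birkhoff–James orthogonality at each $x\in\operatorname{Ext}B_{\mathbb{X}}$, then $T$ is bijective.
   Context: $u\perp_B v$ means $\|u+\lambda v\|\ge\|u\|$ for all real $\lambda$; $T$ preserves Birkhoff–James orthogonality at $x$ if $x\perp_B v\Rightarrow Tx\perp_B Tv$ for all $v$. $\operatorname{Ext}B_{\mathbb{X}}$ is the set of extreme points of the closed unit ball. *)

From mathcomp Require Import all_boot all_order all_algebra.
From mathcomp Require Import reals.
Set Implicit Arguments. Unset Strict Implicit. Unset Printing Implicit Defensive.
Import Order.TTheory GRing.Theory Num.Theory.
Local Open Scope ring_scope.

(* A finite-dimensional real normed space is modelled (up to isometric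
   isomorphism) as 'rV[R]_n equipped with an arbitrary norm N. *)
Definition is_norm (R : realType) (n : nat) (N : 'rV[R]_n -> R) : Prop :=
  [/\ forall x y, N (x + y) <= N x + N y,
      forall (a : R) x, N (a *: x) = `|a| * N x
    & forall x, N x = 0 -> x = 0].

Definition bj_orth (R : realType) (n : nat) (N : 'rV[R]_n -> R) (u v : 'rV[R]_n) : Prop :=
  forall l : R, N u <= N (u + l *: v).

Definition preserves_bj_at (R : realType) (n : nat) (N : 'rV[R]_n -> R)
  (T : 'rV[R]_n -> 'rV[R]_n) (x : 'rV[R]_n) : Prop :=
  forall v, bj_orth N x v -> bj_orth N (T x) (T v).

Definition ext_ball (R : realType) (n : nat) (N : 'rV[R]_n -> R) (x : 'rV[R]_n) : Prop :=
  N x <= 1 /\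
  forall (y z : 'rV[R]_n) (t : R), N y <= 1 -> N z <= 1 -> 0 < t -> t < 1 ->
    x = t *: y + (1 - t) *: z -> y = z.

From mathcomp Require Import all_boot all_order all_algebra.
From mathcomp Require Import ring lra.
From mathcomp Require Import boolp classical_sets reals topology normedtype derive.
Import Order.TTheory GRing.Theory Num.Theory.
Import numFieldNormedType.Exports.
Local Open Scope classical_set_scope.
Local Open Scope ring_scope.
Set Implicit Arguments. Unset Strict Implicit. Unset Printing Implicit Defensive.

(* Suppose [T z = 0] with [z <> 0], and pick [y] with [T y <> 0]; the functional
   [c := T^* T y] satisfies [c.z = 0 < c.y]. Maximizing the strictly convex
   function [v |-> c.v + eps z.v + del |v|^2] over the unit ball gives an extreme
   point [x] at which the gradient [w] supports the ball; for [del << eps << 1]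
   we still have [c.x > 0] and [w.z > 0]. Every vector of [ker w], in particular
   [v := x - (w.x / w.z) z], is then Birkhoff-James orthogonal to [x], and
   [T v = T x]. Hence [T x] is orthogonal to itself, i.e. [T x = 0], contradicting
   [c.x = T y . T x > 0]. *)

Lemma linear_bij_of_ker0 (R : fieldType) (n : nat) (T : {linear 'rV[R]_n -> 'rV[R]_n}) :
  (forall z, T z = 0 -> z = 0) -> bijective T.
Proof.
move=> kerT0; set A := lin1_mx T.
have TA u : T u = u *m A by rewrite mul_rV_lin1.
have unitA : A \in unitmx.
  rewrite -row_free_unit -kermx_eq0; apply/eqP/row_matrixP => i.
  by rewrite row0; apply: kerT0; rewrite TA; apply/sub_kermxP/row_sub.
by exists (fun x => x *m invmx A) => x /=; rewrite TA ?mulmxK ?mulmxKV.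
Qed.

Lemma lipschitz_continuous (R : realType) (V : normedModType R) (f : V -> R) (C : R) :
  (forall x y, `|f x - f y| <= C * `|x - y|) -> continuous f.
Proof.
move=> fC x; apply/(@cvgrPdist_lt _ _ _ _ (nbhs_filter x)) => e e0.
have C1 : 0 < `|C| + 1 by rewrite ltr_pwDr // normr_ge0.
near=> y; apply: (le_lt_trans (fC x y)).
apply: (@le_lt_trans _ _ ((`|C| + 1) * `|x - y|)).
  by apply: ler_wpM2r; rewrite // (le_trans (ler_norm _)) // lerDl.
rewrite -ltr_pdivlMl //; near: y.
have e'0 : 0 < e / (`|C| + 1) by rewrite divr_gt0.
by have := @cvgr_dist_lt _ _ _ _ (nbhs_filter x) id x cvg_id _ e'0; rewrite mulrC.
Unshelve. all: by end_near. Qed.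

Section Dot.
Variables (R : realType) (n : nat).
Implicit Types a x y v : 'rV[R]_n.

Definition dot a x : R := \sum_i a 0 i * x 0 i.

Lemma dotC a x : dot a x = dot x a.
Proof. by apply: eq_bigr => i _; rewrite mulrC. Qed.

Lemma dotDr a x y : dot a (x + y) = dot a x + dot a y.
Proof. by rewrite /dot -big_split; apply: eq_bigr => i _; rewrite mxE mulrDr. Qed.

Lemma dotZr a k x : dot a (k *: x) = k * dot a x.
Proof. by rewrite /dot mulr_sumr; apply: eq_bigr => i _; rewrite mxE mulrCA. Qed.

Lemma dotDl a x y : dot (x + y) a = dot x a + dot y a.
Proof. by rewrite !(dotC _ a) dotDr. Qed.

Lemma dotZl a k x : dot (k *: x) a = k * dot x a.
Proof. by rewrite !(dotC _ a) dotZr. Qed.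

Lemma dotNr a x : dot a (- x) = - dot a x.
Proof. by rewrite -scaleN1r dotZr mulN1r. Qed.

Lemma dotBr a x y : dot a (x - y) = dot a x - dot a y.
Proof. by rewrite dotDr dotNr. Qed.

Lemma dot0r a : dot a 0 = 0.
Proof. by rewrite -(scale0r 0) dotZr mul0r. Qed.

Lemma dot_ge0 x : 0 <= dot x x.
Proof. by apply: sumr_ge0 => i _; rewrite -expr2 sqr_ge0. Qed.

Lemma dot_eq0 x : dot x x = 0 -> x = 0.
Proof.
move/eqP; rewrite psumr_eq0 => [/allP x0|i _]; last by rewrite -expr2 sqr_ge0.
apply/rowP => i; rewrite mxE; apply/eqP.
by have /implyP/(_ isT) := x0 i (mem_index_enum i); rewrite mulf_eq0 orbb.
Qed.

Lemma dot_gt0 x : x != 0 -> 0 < dot x x.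
Proof. by move=> x0; rewrite lt_def dot_ge0 andbT; apply: contra_neq x0; apply: dot_eq0. Qed.

Lemma dot_mulmx a x (A : 'M[R]_n) : dot a (x *m A) = dot (a *m A^T) x.
Proof.
rewrite /dot; under eq_bigr do rewrite mxE big_distrr /=.
rewrite exchange_big; apply: eq_bigr => j _; rewrite mxE big_distrl /=.
by apply: eq_bigr => i _; rewrite !mxE mulrA mulrAC.
Qed.

Lemma dotDD x d : dot (x + d) (x + d) = dot x x + 2 * dot x d + dot d d.
Proof. by rewrite dotDl !dotDr (dotC d x); lra. Qed.

Lemma dot_continuous (f g : 'rV[R]_n -> 'rV[R]_n) :
  continuous f -> continuous g -> continuous (fun x => dot (f x) (g x)).
Proof.
move=> fc gc; apply: (continuous_big (op := +%R) (x0 := 0)) => [|i _ x].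
  exact: add_continuous.
have coord_comp (h : 'rV[R]_n -> 'rV[R]_n) : continuous h -> continuous (fun y => h y 0 i).
  by move=> hc y; exact: (continuous_comp (hc y) (@coord_continuous _ 1 n 0 i (h y))).
by apply: continuousM; apply: coord_comp.
Qed.

Lemma dotr_continuous a : continuous (dot a).
Proof.
by apply: (@dot_continuous (fun=> a) id); [exact: cst_continuous | move=> ?; exact: cvg_id].
Qed.

Lemma dot_self_continuous : continuous (fun v => dot v v).
Proof. by apply: (@dot_continuous id id) => ?; exact: cvg_id. Qed.

Definition quad a (del : R) v := dot a v + del * dot v v.

Lemma quad_continuous a del : continuous (quad a del).
Proof.
move=> v; apply: continuousD; first exact: dotr_continuous.
by apply: continuousM; [exact: cst_continuous | exact: dot_self_continuous].
Qed.

(* The derivative of [quad a del] at [x] is [v |-> dot (a + 2 del x) v], and the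
   quadratic remainder is nonnegative, so a maximizer is a linear maximizer too. *)
Lemma quad_argmax_support (B : set 'rV[R]_n) a del x : 0 <= del ->
  (forall v, B v -> quad a del v <= quad a del x) ->
  forall v, B v -> dot (a + (2 * del) *: x) v <= dot (a + (2 * del) *: x) x.
Proof.
move=> del0 xmax v Bv; have := xmax v Bv.
have [d ->] : exists d, v = x + d by exists (v - x); rewrite addrC subrK.
rewrite /quad dotDD !dotDl !dotZl !dotDr.
by have := dot_ge0 d; nra.
Qed.

Lemma quad_argmax_ext (N : 'rV[R]_n -> R) a del x : 0 < del -> N x <= 1 ->
  (forall v, N v <= 1 -> quad a del v <= quad a del x) -> ext_ball N x.
Proof.
move=> del0 Nx xmax; split => // y z t Ny Nz t0 t1 xE.
have := xmax y Ny; have := xmax z Nz; rewrite xE.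
have [d ->] : exists d, y = z + d by exists (y - z); rewrite addrC subrK.
have -> : t *: (z + d) + (1 - t) *: z = z + t *: d.
  by apply/rowP => i; rewrite !mxE; ring.
rewrite /quad !dotDD !dotDr !dotZr !(dotZl _ t) => Pz Pd.
have dd0 := dot_ge0 d.
have : del * (t * (1 - t)) * dot d d <= 0 by nra.
rewrite pmulr_rle0 ?mulr_gt0 ?subr_gt0 // => dd.
by rewrite (@dot_eq0 d) ?addr0 //; apply/eqP; rewrite eq_le dd dd0.
Qed.

End Dot.

Section NormedSpace.
Variables (R : realType) (n : nat) (N : 'rV[R]_n -> R).
Hypothesis hN : is_norm N.
Implicit Types u v w x y z : 'rV[R]_n.

Lemma N_triangle x y : N (x + y) <= N x + N y. Proof. by case: hN. Qed.

Lemma NZ (a : R) x : N (a *: x) = `|a| * N x. Proof. by case: hN. Qed.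

Lemma N_eq0 x : N x = 0 -> x = 0. Proof. by case: hN => _ _; apply. Qed.

Lemma N0 : N 0 = 0.
Proof. by rewrite -(scale0r 0) NZ normr0 mul0r. Qed.

Lemma NN x : N (- x) = N x.
Proof. by rewrite -scaleN1r NZ normrN normr1 mul1r. Qed.

Lemma N_ge0 x : 0 <= N x.
Proof. by have := N_triangle x (- x); rewrite subrr N0 NN => h; lra. Qed.

Lemma N_gt0 x : x != 0 -> 0 < N x.
Proof. by move=> x0; rewrite lt_def N_ge0 andbT; apply: contra_neq x0; apply: N_eq0. Qed.

Lemma N_normalize x : x != 0 -> N ((N x)^-1 *: x) = 1.
Proof.
move=> x0; have Nx0 := N_gt0 x0.
by rewrite NZ gtr0_norm ?invr_gt0 // mulVf ?gt_eqF.
Qed.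

Lemma N_dist x y : `|N x - N y| <= N (x - y).
Proof.
have := N_triangle (x - y) y; have := N_triangle (y - x) x.
rewrite !subrK -[y - x]opprB NN => h1 h2.
by rewrite ler_norml; apply/andP; split; lra.
Qed.

Lemma N_sum (I : Type) (r : seq I) (F : I -> 'rV[R]_n) :
  N (\sum_(i <- r) F i) <= \sum_(i <- r) N (F i).
Proof.
elim/big_rec2: _ => [|i y2 y1 _ IH]; first by rewrite N0.
by apply: le_trans (N_triangle _ _) _; rewrite lerD2l.
Qed.

Lemma N_le_normr x : N x <= (\sum_j N (delta_mx 0 j)) * `|x|.
Proof.
rewrite {1}(row_sum_delta x); apply: le_trans (N_sum _ _) _.
rewrite mulr_suml; apply: ler_sum => j _; rewrite NZ mulrC.
apply: ler_wpM2l; first exact: N_ge0.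
rewrite [leRHS]/Num.norm /= mx_normrE; apply/bigmax_geP; right.
by exists (0, j) => //=; rewrite mem_enum.
Qed.

Lemma N_continuous : continuous N.
Proof. by apply: lipschitz_continuous => x y; apply: le_trans (N_dist x y) (N_le_normr _). Qed.

Lemma normr_le_N : exists2 m, 0 < m & forall x, m * `|x| <= N x.
Proof.
pose S := [set x : 'rV[R]_n | `|x| = 1].
have S_normalize x : x != 0 -> S (`|x|^-1 *: x).
  move=> x0; rewrite /S /= normrZ normrV ?unitfE ?normr_eq0 // normr_id.
  by rewrite mulVf // normr_eq0.
have [S0|S0] := pselect (S !=set0); last first.
  exists 1 => // x; have [->|x0] := eqVneq x 0; first by rewrite normr0 mulr0 N0.
  by exfalso; apply: S0; exists (`|x|^-1 *: x); exact: S_normalize.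
have cS : compact S.
  apply: bounded_closed_compact.
    change (\forall M \near +oo, forall x, S x -> `|x| <= M).
    near=> M => x ->; near: M; apply: nbhs_pinfty_ge; exact: num_real.
  rewrite (_ : S = Num.norm @^-1` [set 1]) //.
  by apply: (continuous_closedP _).1; [exact: norm_continuous | exact: closed_eq].
have [c] := EVT_min_rV S0 cS (continuous_subspaceT N_continuous).
rewrite inE /S /= => c1 cmin.
have c0 : c != 0 by apply: contra_eq_neq c1 => ->; rewrite normr0 eq_sym oner_neq0.
exists (N c); first exact: N_gt0.
move=> x; have [->|x0] := eqVneq x 0; first by rewrite normr0 mulr0 N0.
have := cmin _ (mem_set (S_normalize x x0)); rewrite NZ normrV ?unitfE ?normr_eq0 //.
by rewrite normr_id ler_pdivlMl ?normr_gt0 // mulrC.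
Unshelve. all: by end_near. Qed.

Lemma unit_ball_compact : compact [set v | N v <= 1].
Proof.
have [m m0 mN] := normr_le_N.
apply: bounded_closed_compact.
  change (\forall M \near +oo, forall x, N x <= 1 -> `|x| <= M).
  near=> M => x Nx; apply: (@le_trans _ _ m^-1).
    by rewrite -[m^-1]mulr1 ler_pdivlMl //; exact: le_trans (mN x) Nx.
  by near: M; apply: nbhs_pinfty_ge; exact: num_real.
rewrite (_ : [set v | N v <= 1] = N @^-1` [set t | t <= 1]) //.
by apply: (continuous_closedP _).1; [exact: N_continuous | exact: closed_le].
Unshelve. all: by end_near. Qed.

Lemma unit_ball_argmax (f : 'rV[R]_n -> R) : continuous f ->
  exists2 x, N x <= 1 & forall v, N v <= 1 -> f v <= f x.
Proof.
move=> fc; have ball0 : [set v | N v <= 1] !=set0 by exists 0; rewrite /= N0.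
have [x] := EVT_max_rV ball0 unit_ball_compact (continuous_subspaceT fc).
by rewrite inE => Nx xmax; exists x => // v Nv; apply: xmax; rewrite inE.
Qed.

Definition supports w x := forall v, N v <= 1 -> dot w v <= dot w x.

Lemma bj_orth_self u : bj_orth N u u -> u = 0.
Proof.
move=> /(_ (-1)); rewrite scaleN1r subrr N0 => Nu0.
by apply: N_eq0; apply/eqP; rewrite eq_le Nu0 N_ge0.
Qed.

Lemma supports_gt0 w x z : supports w x -> 0 < dot w z -> 0 < dot w x.
Proof.
move=> wmax wz; have z0 : z != 0 by apply: contraTneq wz => ->; rewrite dot0r ltxx.
have := wmax ((N z)^-1 *: z); rewrite N_normalize // lexx dotZr => /(_ isT).
by apply: lt_le_trans; rewrite mulr_gt0 // invr_gt0 N_gt0.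
Qed.

(* [dot w] is constant on the hyperplane [x + ker w], which therefore misses the
   open unit ball. *)
Lemma bj_orth_of_supports w x : N x <= 1 -> 0 < dot w x -> supports w x ->
  forall v, dot w v = 0 -> bj_orth N x v.
Proof.
move=> Nx wx wmax v wv l; set u := x + l *: v.
have wu : dot w u = dot w x by rewrite dotDr dotZr wv mulr0 addr0.
have u0 : u != 0 by apply: contraTneq wx => u0; rewrite -wu u0 dot0r ltxx.
have := wmax ((N u)^-1 *: u); rewrite N_normalize // lexx dotZr wu => /(_ isT).
by rewrite ger_pMl // invf_le1 ?N_gt0 // => /(le_trans Nx).
Qed.

(* [C] bounds [|z.v|] and [v.v] on the ball; [eps] is small enough to keep
   [c.x > 0], and [del] small enough relative to [eps] that [w.z > 0]. *)
Lemma extreme_support_exists c z p : z != 0 -> dot c z = 0 -> N p <= 1 ->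
  0 < dot c p ->
  exists2 x, ext_ball N x & 0 < dot c x /\ exists2 w, supports w x & 0 < dot w z.
Proof.
move=> z0 cz Np cp.
have [m1 _ m1max] := unit_ball_argmax (@dotr_continuous _ _ z).
have [m2 _ m2max] := unit_ball_argmax (@dot_self_continuous R n).
have N01 : N 0 <= 1 by rewrite N0.
set C := dot z m1 + dot m2 m2 + 1.
have C0 : 0 < C by have := m1max 0 N01; rewrite /C dot0r; have := dot_ge0 m2; lra.
have zC v : N v <= 1 -> `|dot z v| <= C.
  move=> Nv; have := m1max v Nv; have := m1max (- v); rewrite NN dotNr => /(_ Nv).
  by have := dot_ge0 m2; rewrite /C ler_norml; lra.
have vC v : N v <= 1 -> dot v v <= C.
  by move=> Nv; have := m2max v Nv; have := m1max 0 N01; rewrite /C dot0r; lra.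
set eta := dot c p; set gam := dot z z; have gam0 : 0 < gam by exact: dot_gt0.
set eps := eta / (4 * C); set del := eps * gam / (gam + 4 * C).
have eps0 : 0 < eps by rewrite divr_gt0 // mulr_gt0.
have epsC : eps * C * 4 = eta by rewrite /eps; field; rewrite gt_eqF.
have gamC : 0 < gam + 4 * C by rewrite addr_gt0 ?mulr_gt0.
have del0 : 0 < del := divr_gt0 (mulr_gt0 eps0 gam0) gamC.
have delE : del * (gam + 4 * C) = eps * gam by rewrite /del mulfVK // (gt_eqF gamC).
have del_eps : del <= eps.
  by rewrite -(ler_pM2r gamC) delE ler_pM2l // lerDl mulr_ge0 // ltW.
have [x Nx xmax] := unit_ball_argmax (@quad_continuous _ _ (c + eps *: z) del).
exists x; first exact: quad_argmax_ext xmax.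
have := zC x Nx; have := vC x Nx; rewrite ler_norml => xx /andP[zx1 zx2].
split.
  have := xmax p Np; have := zC p Np; rewrite ler_norml => /andP[zp1 _].
  rewrite /quad !dotDl !dotZl -/eta => pp.
  have := dot_ge0 p; nra.
exists (c + eps *: z + (2 * del) *: x); first exact: quad_argmax_support (ltW del0) xmax.
rewrite !dotDl !dotZl cz -/gam (dotC x); nra.
Qed.

End NormedSpace.

Theorem mainTheorem11 (R : realType) (n : nat) (N : 'rV[R]_n -> R)
  (T : {linear 'rV[R]_n -> 'rV[R]_n}) :
  is_norm N ->
  (exists x, T x != 0) ->
  (forall x, ext_ball N x -> preserves_bj_at N T x) ->
  bijective T.
Proof.
move=> hN [y Ty0] T_bj; apply: linear_bij_of_ker0 => z Tz.
have [//|z0] := eqVneq z 0.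
have y0 : y != 0 by apply: contraNneq Ty0 => ->; rewrite linear0.
pose c := T y *m (lin1_mx T)^T.
have cT v : dot c v = dot (T y) (T v) by rewrite -dot_mulmx mul_rV_lin1.
have cz : dot c z = 0 by rewrite cT Tz dot0r.
have Np : N ((N y)^-1 *: y) <= 1 by rewrite (N_normalize hN y0).
have cp : 0 < dot c ((N y)^-1 *: y).
  by rewrite cT linearZ dotZr mulr_gt0 ?dot_gt0 // invr_gt0 (N_gt0 hN y0).
have [x ext_x [cx [w wx_sup wz]]] := extreme_support_exists hN z0 cz Np cp.
pose v := x - (dot w x / dot w z) *: z.
have wv : dot w v = 0 by rewrite dotBr dotZr mulfVK ?gt_eqF // subrr.
have wx := supports_gt0 hN wx_sup wz.
have := T_bj x ext_x v (bj_orth_of_supports hN ext_x.1 wx wx_sup wv).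
rewrite linearB linearZ /= Tz scaler0 subr0 => /(bj_orth_self hN) Tx0.
by move: cx; rewrite cT Tx0 dot0r ltxx.
Qed.
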